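(* Let $d\in\mathbb N$ and let $\mathcal K$ be a Fraïssé class. The following are equivalent: (1) the class of structures in $\mathcal K$ with Ramsey degree for embeddings in $\mathcal K$ at most $d$ is cofinal in $\mathcal K$; (2) $\mathcal K$ has Ramsey degree for embeddings at most $d$.
   Context: For structures $A,B$, $B^A$ is the set of embeddings of $A$ into $B$; $A\le B$ means $B^A\ne\emptyset$; $\mathcal D$ is cofinal in $\mathcal K$ if for every $A\in\mathcal K$ there is $B\in\mathcal D$ with $A\le B$. A Fraïssé class is a class of finite structures that is hereditary, has joint embedding and amalgamation, and contains arbitrarily large finite structures. $C\hookrightarrow(B)^A_{k,d}$ means: for every $\chi:C^A\to\{0,\dots,k-1\}$ there is $b\in C^B$ with $|\chi(\{b\circ a:a\in B^A\})|\le d$. The Ramsey degree for embeddings of $A$ in $\mathcal K$ is the least $d$ such that for all $B\in\mathcal K$, $k\ge2$ there is $C\in\mathcal K$ with $C\hookrightarrow(B)^A_{k,d}$ ($\infty$ if none); that of $\mathcal K$ is the supremum over $A\in\mathcal K$. *)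

From mathcomp Require Import all_boot.
Set Implicit Arguments. Unset Strict Implicit. Unset Printing Implicit Defensive.

Record signature := Signature {
  fsym : Type; farity : fsym -> nat;
  rsym : Type; rarity : rsym -> nat }.

Record structure (L : signature) := Structure {
  carrier :> finType;
  fun_interp : forall f : fsym L, (farity f).-tuple carrier -> carrier;
  rel_interp : forall r : rsym L, pred ((rarity r).-tuple carrier) }.

Definition is_emb (L : signature) (A B : structure L) (h : {ffun A -> B}) : Prop :=
  injective h /\
  (forall (f : fsym L) (t : (farity f).-tuple A),
      h (@fun_interp L A f t) = @fun_interp L B f (map_tuple h t)) /\
  (forall (r : rsym L) (t : (rarity r).-tuple A),
      @rel_interp L B r (map_tuple h t) = @rel_interp L A r t).

Definition embeds (L : signature) (A B : structure L) : Prop :=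
  exists h : {ffun A -> B}, is_emb h.

Definition comp_ffun (A B C : finType) (b : {ffun B -> C}) (a : {ffun A -> B})
  : {ffun A -> C} := [ffun x => b (a x)].

(* C --> (B)^A_{k,d}: every colouring chi of C^A with k colours
   (given as a colouring of all maps A -> C; only its values on
   embeddings matter) admits an embedding b : B -> C such that
   chi takes at most d values on {b o a : a in B^A}. *)
Definition arrow (L : signature) (C B A : structure L) (k d : nat) : Prop :=
  forall chi : {ffun A -> C} -> 'I_k,
    exists b : {ffun B -> C}, is_emb b /\
      exists s : seq 'I_k, size s <= d /\
        forall a : {ffun A -> B}, is_emb a -> chi (comp_ffun b a) \in s.

Definition rdeg_le (L : signature) (K : structure L -> Prop) (A : structure L)
  (d : nat) : Prop :=
  forall B, K B -> forall k, 2 <= k -> exists C, K C /\ arrow C B A k d.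

Definition class_rdeg_le (L : signature) (K : structure L -> Prop) (d : nat) : Prop :=
  forall A, K A -> rdeg_le K A d.

Definition cofinal (L : signature) (D K : structure L -> Prop) : Prop :=
  forall A, K A -> exists B, D B /\ embeds A B.

Definition hereditary (L : signature) (K : structure L -> Prop) : Prop :=
  forall A B : structure L, K B -> embeds A B -> K A.

Definition joint_embedding (L : signature) (K : structure L -> Prop) : Prop :=
  forall A B, K A -> K B -> exists C, K C /\ embeds A C /\ embeds B C.

Definition amalgamation (L : signature) (K : structure L -> Prop) : Prop :=
  forall (A B1 B2 : structure L) (f1 : {ffun A -> B1}) (f2 : {ffun A -> B2}),
    K A -> K B1 -> K B2 -> is_emb f1 -> is_emb f2 ->
    exists C : structure L, K C /\
      exists (g1 : {ffun B1 -> C}) (g2 : {ffun B2 -> C}),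
        is_emb g1 /\ is_emb g2 /\ forall x : A, g1 (f1 x) = g2 (f2 x).

Definition arbitrarily_large (L : signature) (K : structure L -> Prop) : Prop :=
  forall n, exists A, K A /\ n <= #|A|.

Definition fraisse_class (L : signature) (K : structure L -> Prop) : Prop :=
  [/\ hereditary K, joint_embedding K, amalgamation K & arbitrarily_large K].

From mathcomp Require Import all_boot.
From Stdlib Require Import Classical.

Set Implicit Arguments. Unset Strict Implicit. Unset Printing Implicit Defensive.

(* If every structure of K is itself cofinally bounded, the
   class trivially is cofinal (take B := A).  For the converse it suffices to
   show that, in a class with amalgamation, a Ramsey degree bound passes
   DOWN along embeddings: if A embeds into A' via e and A' has Ramsey degree
   at most d, so does A.  Given B, we first amalgamate repeatedly (once for
   every embedding a : A -> B) to obtain B' >= B in which every copy of A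
   inside B extends to a copy of A' inside B'.  A colouring chi of C^A
   induces the colouring a' |-> chi (a' o e) of C^A'; a copy b' of B' on
   which the induced colouring takes at most d values restricts to a copy of
   B on which chi takes at most d values, because each b o a factors as
   b' o a' o e. *)

Lemma map_tuple_comp_ffun (A B C : finType) (b : {ffun B -> C}) (a : {ffun A -> B})
  n (t : n.-tuple A) : map_tuple (comp_ffun b a) t = map_tuple b (map_tuple a t).
Proof. by apply: val_inj => /=; rewrite -map_comp; apply: eq_map => x; rewrite ffunE. Qed.

Lemma comp_emb (L : signature) (A B C : structure L) (b : {ffun B -> C})
  (a : {ffun A -> B}) : is_emb b -> is_emb a -> is_emb (comp_ffun b a).
Proof.
move=> [b_inj [b_fun b_rel]] [a_inj [a_fun a_rel]]; split; [|split].
- by move=> x y; rewrite !ffunE => /b_inj /a_inj.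
- by move=> f t; rewrite map_tuple_comp_ffun ffunE a_fun b_fun.
- by move=> r t; rewrite map_tuple_comp_ffun b_rel a_rel.
Qed.

Lemma id_emb (L : signature) (A : structure L) : is_emb ([ffun x => x] : {ffun A -> A}).
Proof.
have map_id_ffun n (t : n.-tuple A) : map_tuple [ffun x => x] t = t.
  by apply: val_inj => /=; rewrite (eq_map (g := id)) ?map_id // => x; rewrite ffunE.
split; [|split].
- by move=> x y; rewrite !ffunE.
- by move=> f t; rewrite map_id_ffun ffunE.
- by move=> r t; rewrite map_id_ffun.
Qed.

Lemma embeds_refl (L : signature) (A : structure L) : embeds A A.
Proof. by exists [ffun x => x]; exact: id_emb. Qed.

Definition lifts (L : signature) (A A' B B' : structure L)
  (e : {ffun A -> A'}) (g : {ffun B -> B'}) (a : {ffun A -> B}) : Prop :=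
  exists a' : {ffun A' -> B'}, is_emb a' /\ forall x, a' (e x) = g (a x).

Lemma lifts_comp (L : signature) (A A' B B' B'' : structure L)
  (e : {ffun A -> A'}) (g : {ffun B -> B'}) (h : {ffun B' -> B''}) (a : {ffun A -> B}) :
  is_emb h -> lifts e g a -> lifts e (comp_ffun h g) a.
Proof.
move=> h_emb [a' [a'_emb a'_e]]; exists (comp_ffun h a'); split.
  exact: comp_emb.
by move=> x; rewrite !ffunE a'_e.
Qed.

Section Extension.
Variables (L : signature) (K : structure L -> Prop).
Hypothesis amalgK : amalgamation K.
Variables (A A' B : structure L) (e : {ffun A -> A'}).
Hypotheses (KA : K A) (KA' : K A') (KB : K B) (e_emb : is_emb e).

(* One amalgamation per listed embedding: B embeds into some B' in K along
   which all embeddings in a given list lift. *)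
Lemma extend_seq (s : seq {ffun A -> B}) :
  exists (B' : structure L) (g : {ffun B -> B'}), [/\ K B', is_emb g &
    forall a, a \in s -> is_emb a -> lifts e g a].
Proof.
elim: s => [|a s [B1 [g1 [KB1 g1_emb lift1]]]].
  by exists B, [ffun x => x]; split => //; exact: id_emb.
have [a_emb | a_nemb] := classic (is_emb a); last first.
  exists B1, g1; split => // a0; rewrite in_cons => /orP[/eqP -> //|]; exact: lift1.
have [C [KC [h1 [h2 [h1_emb [h2_emb h_amalg]]]]]] :=
  amalgK KA KB1 KA' (comp_emb g1_emb a_emb) e_emb.
exists C, (comp_ffun h1 g1); split => //; first exact: comp_emb.
move=> a0; rewrite in_cons => /orP[/eqP -> _ | a0s a0_emb].
  by exists h2; split => // x; rewrite -h_amalg !ffunE.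
exact: lifts_comp (lift1 a0 a0s a0_emb).
Qed.

(* Since A and B are finite, all embeddings A -> B lift simultaneously. *)
Lemma extend_all :
  exists (B' : structure L) (g : {ffun B -> B'}), [/\ K B', is_emb g &
    forall a, is_emb a -> lifts e g a].
Proof.
have [B' [g [KB' g_emb lift]]] := extend_seq (enum {: {ffun A -> B}}).
by exists B', g; split => // a; apply: lift; rewrite mem_enum.
Qed.

End Extension.

Lemma rdeg_le_embeds (L : signature) (K : structure L -> Prop) (d : nat)
  (A A' : structure L) :
  amalgamation K -> K A -> K A' -> embeds A A' -> rdeg_le K A' d -> rdeg_le K A d.
Proof.
move=> amalgK KA KA' [e e_emb] degA' B KB k k2.
have [B' [g [KB' g_emb lift]]] := extend_all amalgK KA KA' KB e_emb.
have [C [KC arrC]] := degA' B' KB' k k2.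
exists C; split => // chi.
have [b' [b'_emb [s [size_s col_s]]]] := arrC [ffun a' => chi (comp_ffun a' e)].
exists (comp_ffun b' g); split; first exact: comp_emb.
exists s; split => // a a_emb.
have [a' [a'_emb a'_e]] := lift a a_emb.
have factor : comp_ffun (comp_ffun b' g) a = comp_ffun (comp_ffun b' a') e.
  by apply/ffunP => x; rewrite !ffunE a'_e.
by rewrite factor; have := col_s a' a'_emb; rewrite ffunE.
Qed.

Theorem mainTheorem13 (L : signature) (K : structure L -> Prop) (d : nat) :
  fraisse_class K ->
  (cofinal (fun A => K A /\ rdeg_le K A d) K <-> class_rdeg_le K d).
Proof.
case=> _ _ amalgK _; split => [cofK A KA | degK A KA].
- have [A' [[KA' degA'] A_A']] := cofK A KA.
  exact: rdeg_le_embeds amalgK KA KA' A_A' degA'.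
- by exists A; split; [split => //; exact: degK | exact: embeds_refl].
Qed.
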